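(* Fix $\rho_r\in(0,1)$, $\rho_w\in(0,1/2)$, $\epsilon>0$ with $\rho_r<1-h(\rho_w)-2\epsilon$. Fix a view $V\in\{0,1,?\}^n$ with $\rho_r n$ non-$?$ coordinates and $e\in\{0,1\}^n$ of Hamming weight at most $\rho_w n$. Let $S_r$ consist of $2^{\epsilon n/4}$ independent uniformly random elements of the set of strings consistent with $V$. Then with probability $1-\exp(-\Omega(n^2))$ over the choice of $S_r$, there are at most $O(n^4)\cdot2^{\epsilon n/8}$ elements $x\in S_r$ such that the Hamming ball of radius $\rho_w n$ around $x+e$ contains another element of $S_r$.
   Context: $h$ is the binary entropy function. A string $x$ is consistent with $V=(v_i)$ if $x_i=v_i$ whenever $v_i\ne ?$. *)

From mathcomp Require Import all_boot.
From Stdlib Require Import Reals.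
Set Implicit Arguments. Unset Strict Implicit. Unset Printing Implicit Defensive.

(* binary strings of length n, and views in {0,1,?}^n (None = ?) *)
Definition bstr (n : nat) := {ffun 'I_n -> bool}.
Definition view (n : nat) := {ffun 'I_n -> option bool}.

Definition consistent n (V : view n) (x : bstr n) : bool :=
  [forall i, if V i is Some b then x i == b else true].

Definition num_revealed n (V : view n) : nat := #|[set i | V i != None]|.

Definition hweight n (x : bstr n) : nat := #|[set i | x i]|.
Definition hdist n (x y : bstr n) : nat := #|[set i | x i != y i]|.
Definition addstr n (x y : bstr n) : bstr n := [ffun i => x i (+) y i].

Definition Rleb (a b : R) : bool := if Rle_dec a b then true else false.

(* a sample S_r of N elements is a function 'I_N -> bstr n (independent draws,
   so repetitions are allowed). *)
Definition bad_index n N (e : bstr n) (rad : R) (S : {ffun 'I_N -> bstr n})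
  (i : 'I_N) : bool :=
  [exists j : 'I_N, (j != i) && Rleb (INR (hdist (addstr (S i) e) (S j))) rad].

Definition num_bad n N (e : bstr n) (rad : R) (S : {ffun 'I_N -> bstr n}) : nat :=
  #|[set i | bad_index e rad S i]|.

(* sample space: N independent uniform draws from the strings consistent with V *)
Definition sample_space n N (V : view n) : {set {ffun 'I_N -> bstr n}} :=
  [set S : {ffun 'I_N -> bstr n} | [forall i, consistent V (S i)]].

Definition prob n N (V : view n) (E : {ffun 'I_N -> bstr n} -> bool) : R :=
  (INR #|[set S in sample_space N V | E S]| / INR #|sample_space N V|)%R.

Definition h2 (p : R) : R :=
  (- p * (ln p / ln 2) - (1 - p) * (ln (1 - p) / ln 2))%R.

Definition nsamples (eps : R) (n : nat) : nat :=
  Z.to_nat (Int_part (Rpower 2 (eps * INR n / 4))).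

(* Call index i of a sample S bad if the ball of radius rho_w n around S_i + e contains some
   other S_j, its partner.  The partner map has no fixed points, so among t (2 t + 2) bad indices
   one finds t whose partners lie outside the chosen set; this yields an idempotent map f moving
   exactly t points along which S is close.  For fixed f, S |-> (S_i + e + S_(f i) on moved
   points) is injective, so S is close along f with probability at most (|B| / |C|)^t, where B
   is the Hamming ball and C the set of strings consistent with V.  A union bound over at most
   N^(2t) maps, with |B| <= 2^(h(rho_w) n), |C| = 2^((1 - rho_r) n) and N <= 2^(eps n / 4),
   bounds the probability of t = n by 2^(-eps n^2); and n (2 n + 2) is far below the
   threshold n^4 2^(eps n / 8). *)

From Stdlib Require Import Reals Lra Lia.
From mathcomp Require Import all_boot all_order all_algebra Rstruct zify.
From Pilot Require Import Defs.
Open Scope R_scope.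
Set Implicit Arguments. Unset Strict Implicit.

Lemma card_family_prod (aT rT : finType) (F : aT -> pred rT) :
  #|finfun.family F| = (\prod_(x : aT) #|F x|)%nat.
Proof.
rewrite card_family /image_mem foldr_map -big_enum /=.
by elim: (enum _) => [|x s IH]; rewrite ?big_nil // big_cons /= IH cardE.
Qed.

Lemma card_family_if (aT rT : finType) (P : pred aT) (A B : {pred rT}) :
  #|finfun.family (fun x => if P x then mem A else mem B)|
    = (#|A| ^ #|P| * #|B| ^ #|predC P|)%nat.
Proof.
rewrite card_family_prod (bigID P) /=.
rewrite (eq_bigr (fun _ => #|A|)); last by move=> x ->.
rewrite [X in (_ * X)%nat](eq_bigr (fun _ => #|B|)); last by move=> x /negbTE ->.
by rewrite !prod_nat_const.
Qed.

Lemma card_bigcup_le (I T : finType) (P : {pred I}) (A : I -> {set T}) :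
  (#|\bigcup_(i in P) A i| <= \sum_(i in P) #|A i|)%nat.
Proof.
elim/big_rec2: _ => [|i B s _ IH]; first by rewrite cards0.
by rewrite cardsU; lia.
Qed.

Definition moved (I : finType) (f : {ffun I -> I}) : {set I} := [set i | f i != i].

Section FreeSubset.
Variables (T : finType) (w : T -> T).

Lemma greedy_free_subset (d t : nat) (Y : {set T}) :
  {in Y, forall y, w y != y} ->
  {in Y, forall b, #|[set y in Y | w y == b]| <= d}%nat ->
  (t * (d + 2) <= #|Y|)%nat ->
  exists2 A : {set T}, A \subset Y /\ #|A| = t & {in A, forall b, w b \notin A}.
Proof.
elim: t Y => [|t IH] Y w_moves w_fibres cardY.
  by exists set0; [rewrite sub0set cards0 | move=> b; rewrite inE].
have [b bY] : {b | b \in Y} by apply/sigW/card_gt0P; lia.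
pose Z := b |: (w b |: [set y in Y | w y == b]).
have cardZ : (#|Z| <= d + 2)%nat.
  by rewrite !cardsU1; have := w_fibres b bY; do 2!case: (_ \notin _); lia.
have subY : Y :\: Z \subset Y by apply: subsetDl.
have [|||A [sA cardA] freeA] := IH (Y :\: Z).
- by move=> y /(subsetP subY); apply: w_moves.
- move=> b' /[dup] /(subsetP subY) b'Y _; apply: leq_trans (w_fibres b' b'Y).
  by apply/subset_leq_card/subsetP => y; rewrite !inE => /andP[/andP[_ ->] ->].
- by rewrite cardsD; have := subset_leq_card (subsetIr Y Z); lia.
have bA : b \notin A by apply/negP => /(subsetP sA); rewrite !inE eqxx.
exists (b |: A).
  by rewrite subUset sub1set bY (subset_trans sA subY) cardsU1 bA cardA.
move=> x; rewrite !inE => /orP[/eqP -> | xA].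
  rewrite negb_or w_moves //=.
  by apply/negP => /(subsetP sA); rewrite !inE eqxx orbT.
rewrite negb_or freeA // andbT; apply/eqP => wx.
by have := subsetP sA x xA; rewrite !inE wx eqxx andbT => /andP[/norP[_ /norP[_ -/negP]]].
Qed.

Lemma free_subset_exists (X : {set T}) (t : nat) :
  {in X, forall y, w y != y} -> (t * (2 * t + 2) <= #|X|)%nat ->
  exists2 A : {set T}, A \subset X /\ #|A| = t & {in A, forall b, w b \notin A}.
Proof.
move=> w_moves cardX.
case: (boolP [exists v, 2 * t <= #|[set y in X | w y == v]|]%nat) =>
  [/existsP[v big_fibre] | small_fibres]; last first.
  apply: (greedy_free_subset (d := 2 * t)) => // b _.
  by move: small_fibres; rewrite negb_exists => /forallP/(_ b); rewrite -ltnNge; lia.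
(* a fibre of w is free: its image {v} lies outside it, since v is not fixed *)
pose Y := [set y in X | w y == v].
have sYX : Y \subset X by apply/subsetP => y; rewrite inE => /andP[].
have [|||A [sAY cardA] freeA] := greedy_free_subset (d := 0) (t := t) (Y := Y).
- by move=> y /(subsetP sYX); apply: w_moves.
- move=> b; rewrite inE => /andP[bX /eqP wb].
  rewrite leqn0 cards_eq0; apply/eqP/setP => y; rewrite !inE.
  apply/negP => /andP[/andP[yX /eqP wy] /eqP wyb].
  by have := w_moves b bX; rewrite wb -wyb wy eqxx.
- by rewrite /Y; lia.
by exists A => //; split => //; apply: subset_trans sAY sYX.
Qed.

Definition retract_on (A : {set T}) : {ffun T -> T} :=
  [ffun i : T => if i \in A then w i else i].

Lemma retract_on_idem (A : {set T}) : {in A, forall b, w b \notin A} ->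
  forall i, retract_on A (retract_on A i) = retract_on A i.
Proof.
move=> freeA i; rewrite !ffunE.
have [iA | /negbTE iA] := boolP (i \in A); first by rewrite (negbTE (freeA i iA)).
by rewrite iA.
Qed.

Lemma moved_retract_on (A : {set T}) : {in A, forall y, w y != y} ->
  moved (retract_on A) = A.
Proof.
move=> w_moves; apply/setP => i; rewrite inE ffunE.
by case: ifPn => [/w_moves | _]; rewrite ?eqxx.
Qed.

End FreeSubset.

(* Defs has its own [Rleb], to which Rstruct's [RlebP] does not apply *)
Lemma RlebP (a b : R) : reflect (a <= b) (Rleb a b).
Proof. by rewrite /Rleb; case: Rle_dec => ?; constructor. Qed.

Lemma hweight_addstr n (x y : bstr n) : hweight (addstr x y) = hdist x y.
Proof. by apply: eq_card => i; rewrite !inE ffunE; case: (x i); case: (y i). Qed.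

Definition hball n (rad : R) : {set bstr n} := [set z | Rleb (INR (hweight z)) rad].

Definition samples n (I : finType) (Cs : {set bstr n}) : {set {ffun I -> bstr n}} :=
  [set S : {ffun I -> bstr n} | [forall i, S i \in Cs]].

Lemma card_samples n (I : finType) (Cs : {set bstr n}) :
  #|samples I Cs| = (#|Cs| ^ #|I|)%nat.
Proof.
rewrite -card_ffun_on; apply: eq_card => S; rewrite inE.
by apply/forallP/ffun_onP.
Qed.

Lemma card_maps_moving_le (I : finType) (t : nat) :
  (#|[set f : {ffun I -> I} | #|moved f| == t]| <= (#|I| * #|I|) ^ t)%nat.
Proof.
pose decode (p : {ffun 'I_t -> I * I}) : {ffun I -> I} :=
  [ffun i => if [pick k | (p k).1 == i] is Some k then (p k).2 else i].
suff /subset_leq_card : [set f : {ffun I -> I} | #|moved f| == t]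
    \subset [set decode p | p : {ffun 'I_t -> I * I}].
  move/leq_trans; apply; apply: leq_trans (leq_imset_card _ _) _.
  by rewrite card_ffun card_prod card_ord.
apply/subsetP => f; rewrite inE => /eqP cardM; apply/imsetP.
pose x k := enum_val (cast_ord (esym cardM) k).
exists [ffun k => (x k, f (x k))] => //; apply/ffunP => i; rewrite ffunE.
case: pickP => [k /eqP | no_k]; first by rewrite ffunE => <-.
have [-> // | fi_ne_i] := eqVneq (f i) i.
have iM : i \in moved f by rewrite inE.
have := no_k (cast_ord cardM (enum_rank_in iM i)).
by rewrite ffunE /x cast_ordK enum_rankK_in ?eqxx.
Qed.

Section PairedSamples.
Variables (n : nat) (I : finType) (e : bstr n) (rad : R) (Cs : {set bstr n}).

Definition idempotent_maps (t : nat) : {set {ffun I -> I}} :=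
  [set f : {ffun I -> I} | [forall i, f (f i) == f i] && (#|moved f| == t)].

Definition close_along (f : {ffun I -> I}) (S : {ffun I -> bstr n}) : bool :=
  [forall i, (f i != i) ==> Rleb (INR (hdist (addstr (S i) e) (S (f i)))) rad].

Definition pair_sums (f : {ffun I -> I}) (S : {ffun I -> bstr n}) : {ffun I -> bstr n} :=
  [ffun i => if f i != i then addstr (addstr (S i) e) (S (f i)) else S i].

(* [f i] is a fixed point of [f], so [S (f i)] is read off unchanged and [S i] is recovered *)
Lemma pair_sums_inj (f : {ffun I -> I}) :
  (forall i, f (f i) = f i) -> injective (pair_sums f).
Proof.
move=> f_idem S1 S2 /ffunP eqS; apply/ffunP => i.
have := eqS i; rewrite !ffunE; case: ifP => // moved_i.
have := eqS (f i); rewrite !ffunE f_idem eqxx /= => -> /ffunP eq_i.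
by apply/ffunP => k; have := eq_i k; rewrite !ffunE; do 4!case: (_ k).
Qed.

Lemma card_close_samples_le t (f : {ffun I -> I}) : f \in idempotent_maps t ->
  (#|[set S in samples I Cs | close_along f S]| * #|Cs| ^ t
     <= #|hball n rad| ^ t * #|Cs| ^ #|I|)%nat.
Proof.
rewrite inE => /andP[/forallP f_idem /eqP cardM].
pose D i := if f i != i then mem (hball n rad) else mem Cs.
have /subset_leq_card : pair_sums f @: [set S in samples I Cs | close_along f S]
    \subset finfun.family D.
  apply/subsetP => _ /imsetP[S + ->]; rewrite !inE => /andP[/forallP inCs /forallP close].
  apply/familyP => i; rewrite /D ffunE.
  case: ifP => moved_i; last exact: inCs.
  by rewrite inE hweight_addstr; have := close i; rewrite moved_i.
rewrite card_imset; last by apply: pair_sums_inj => i; apply/eqP.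
move=> le_card; rewrite card_family_if in le_card.
have cardC_moved := cardC [pred i | f i != i].
have moved_t : #|[pred i | f i != i]| = t.
  by rewrite -cardM; apply: eq_card => i; rewrite !inE.
rewrite moved_t in le_card cardC_moved.
by rewrite -cardC_moved expnD mulnCA mulnC leq_mul2l le_card orbT.
Qed.

End PairedSamples.

Section ManyBad.
Variables (n N : nat) (e : bstr n) (rad : R) (Cs : {set bstr n}).

Definition many_bad (t : nat) : {set {ffun 'I_N -> bstr n}} :=
  [set S in samples 'I_N Cs | t * (2 * t + 2) <= num_bad e rad S]%nat.

Lemma many_bad_close_along t S : S \in many_bad t ->
  exists2 f, f \in idempotent_maps 'I_N t & close_along e rad f S.
Proof.
rewrite inE => /andP[_ many].
pose partner (i : 'I_N) := odflt i [pick j | (j != i) &&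
  Rleb (INR (hdist (addstr (S i) e) (S j))) rad].
have partnerP : {in [set i | bad_index e rad S i], forall i, (partner i != i) &&
    Rleb (INR (hdist (addstr (S i) e) (S (partner i)))) rad}.
  move=> i; rewrite inE => /existsP[j bad_j]; rewrite /partner.
  by case: pickP => [// | /(_ j)]; rewrite bad_j.
have [|A [sA cardA] freeA] :=
  free_subset_exists (T := 'I_N) (w := partner) (X := [set i | bad_index e rad S i]) _ many.
  by move=> i /partnerP/andP[].
have A_moves : {in A, forall i, partner i != i}.
  by move=> i /(subsetP sA)/partnerP/andP[].
exists (retract_on partner A).
  rewrite inE moved_retract_on // cardA eqxx andbT.
  by apply/forallP => i; rewrite retract_on_idem.
apply/forallP => i; rewrite ffunE; case: ifPn => iA; last by rewrite eqxx.
by case/andP: (partnerP i (subsetP sA i iA)) => _ ->; rewrite implybT.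
Qed.

Lemma card_many_bad_le t :
  (#|many_bad t| * #|Cs| ^ t <= (N * N) ^ t * #|hball n rad| ^ t * #|Cs| ^ N)%nat.
Proof.
have /subset_leq_card : many_bad t \subset
    \bigcup_(f in idempotent_maps 'I_N t) [set S in samples 'I_N Cs | close_along e rad f S].
  apply/subsetP => S S_bad; have [f f_idem f_close] := many_bad_close_along S_bad.
  apply/bigcupP; exists f => //; rewrite inE f_close andbT.
  by move: S_bad; rewrite inE => /andP[].
move=> /leq_trans /(_ (card_bigcup_le _ _)) le_sum.
apply: leq_trans (leq_mul le_sum (leqnn _)) _; rewrite big_distrl /=.
apply: (@leq_trans (\sum_(f in idempotent_maps 'I_N t)
                      #|hball n rad| ^ t * #|Cs| ^ N)%nat).
  by apply: leq_sum => f /(card_close_samples_le e rad Cs); rewrite card_ord.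
rewrite sum_nat_const -mulnA leq_mul2r; apply/orP; right.
have := card_maps_moving_le 'I_N t; rewrite card_ord; apply: leq_trans.
by apply/subset_leq_card/subsetP => f; rewrite !inE => /andP[].
Qed.

End ManyBad.

Definition consset n (V : view n) : {set bstr n} := [set x | consistent V x].

Lemma card_consset n (V : view n) : #|consset V| = (2 ^ (n - num_revealed V))%nat.
Proof.
pose F i : pred bool := if V i is Some b then pred1 b else predT.
have -> : #|consset V| = #|finfun.family F|.
  apply: eq_card => x; rewrite inE; apply/forallP/familyP => x_cons i;
  by have := x_cons i; rewrite /F; case: (V i) => //= b; rewrite inE.
rewrite card_family_prod (eq_bigr (fun i => if V i == None then 2 else 1)%nat); last first.
  by move=> i _; rewrite /F; case: (V i) => [b|]; rewrite ?card1 ?card_bool.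
rewrite -big_mkcond prod_nat_const /num_revealed; congr expn.
have := cardC [pred i : 'I_n | V i == None]; rewrite card_ord.
have -> : #|[set i | V i != None]| = #|predC [pred i : 'I_n | V i == None]|.
  by apply: eq_card => i; rewrite !inE.
by move=> cardC_n; rewrite -[X in (X - _)%nat]cardC_n addnK.
Qed.

Lemma exp_le_exp x y : x <= y -> exp x <= exp y.
Proof. by case=> [/exp_increasing/Rlt_le | ->]; [|apply: Rle_refl]. Qed.

Section HammingBall.
Import GRing.Theory Num.Theory.

Definition bernoulli_weight n (p : R) (z : bstr n) : R :=
  (\prod_(i < n) (if z i then p else 1 - p))%R.

Lemma sum_bernoulli_weight n (p : R) : (\sum_(z : bstr n) bernoulli_weight p z)%R = 1.
Proof.
rewrite /bernoulli_weight -(bigA_distr_bigA (fun i (b : bool) => if b then p else 1 - p)%R).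
rewrite (eq_bigr (fun _ => 1%R)) ?prodr_const ?expr1n // => i _.
by rewrite big_bool /= addrC subrK.
Qed.

Lemma bernoulli_weight_hball n (p : R) (z : bstr n) :
  0 < p <= 1/2 -> z \in hball n (p * INR n) ->
  exp (INR n * (p * ln p + (1 - p) * ln (1 - p))) <= bernoulli_weight p z.
Proof.
move=> [p_gt0 p_le]; rewrite inE => /RlebP z_light.
rewrite /bernoulli_weight (bigID (fun i => z i)) /=.
rewrite (eq_bigr (fun _ => p)) ?prodr_const; last by move=> i ->.
rewrite [X in (_ * X)%R](eq_bigr (fun _ => 1 - p)%R) ?prodr_const; last first.
  by move=> i /negbTE ->.
rewrite -!RpowE; set k := (X in p ^ X); set m := (X in (1 - p) ^ X).
have km : (k + m)%nat = n := etrans (cardC _) (card_ord n).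
have k_light : INR k <= p * INR n by rewrite /hweight cardsE in z_light.
have q_gt0 : 0 < 1 - p by lra.
have ln_le : ln p <= ln (1 - p).
  have [lt | eq] := Rle_lt_or_eq_dec p (1 - p) ltac:(lra).
    by left; apply: ln_increasing.
  by rewrite -eq; right.
change (exp (INR n * (p * ln p + (1 - p) * ln (1 - p))) <= p ^ k * (1 - p) ^ m).
rewrite -(exp_ln _ (pow_lt _ k p_gt0)) -(exp_ln _ (pow_lt _ m q_gt0)).
rewrite -exp_plus !ln_pow // -km plus_INR in k_light *.
apply: exp_le_exp; nra.
Qed.

Lemma card_hball_le n (p : R) :
  0 < p <= 1/2 -> INR #|hball n (p * INR n)| <= Rpower 2 (h2 p * INR n).
Proof.
move=> p_range; have [p_gt0 p_le] := p_range.
set c := exp (INR n * (p * ln p + (1 - p) * ln (1 - p))).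
have c_gt0 : 0 < c by apply: exp_pos.
have weight_ge0 (z : bstr n) : (0 <= bernoulli_weight p z)%R.
  apply: prodr_ge0 => i _; case: (z i); first exact/RleP/Rlt_le.
  by rewrite subr_ge0 -R1E; apply/RleP; lra.
have : (\sum_(z in hball n (p * INR n)) c <= \sum_(z : bstr n) bernoulli_weight p z)%R.
  rewrite [leRHS](bigID (mem (hball n (p * INR n)))) /= -[leLHS]addr0.
  apply: lerD; last by apply: sumr_ge0.
  by apply: ler_sum => z /(bernoulli_weight_hball p_range)/RleP.
rewrite sum_bernoulli_weight sumr_const -mulr_natr -INRE => /RleP c_card.
have ln2_gt0 : 0 < ln 2 by have := ln_lt_2; lra.
have -> : Rpower 2 (h2 p * INR n) = / c.
  rewrite /Rpower /c -exp_Ropp; congr exp; rewrite /h2; field; lra.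
by apply: (Rmult_le_reg_l c) => //; rewrite Rinv_r; [exact: c_card | lra].
Qed.

End HammingBall.

Lemma INR_expn m k : INR (m ^ k)%nat = INR m ^ k.
Proof. by elim: k => // k IH; rewrite expnS -multE mult_INR IH. Qed.

Lemma card_many_bad_le_R n N (e : bstr n) (rad : R) (Cs : {set bstr n}) t (delta : R) :
  (0 < #|Cs|)%nat -> INR N ^ 2 * INR #|hball n rad| <= delta * INR #|Cs| ->
  INR #|many_bad N e rad Cs t| <= delta ^ t * INR #|Cs| ^ N.
Proof.
move=> /ltP/lt_INR Cs_gt0 base.
have := le_INR _ _ (ssrnat.leP (@card_many_bad_le n N e rad Cs t)).
rewrite -!multE !mult_INR !INR_expn mult_INR -!Rpow_mult_distr => card_le.
have Cst_gt0 : 0 < INR #|Cs| ^ t by apply: pow_lt.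
apply: (Rmult_le_reg_r _ _ _ Cst_gt0); apply: Rle_trans card_le _.
have -> : delta ^ t * INR #|Cs| ^ N * INR #|Cs| ^ t
          = (delta * INR #|Cs|) ^ t * INR #|Cs| ^ N.
  by rewrite Rpow_mult_distr; ring.
apply: Rmult_le_compat_r; first by apply: pow_le; apply: pos_INR.
apply: pow_incr; split; last by rewrite /= Rmult_1_r in base.
by apply: Rmult_le_pos; [apply: Rmult_le_pos | ]; apply: pos_INR.
Qed.

Lemma sample_space_samples n N (V : view n) :
  sample_space N V = samples 'I_N (consset V).
Proof. by apply/setP => S; rewrite !inE; apply: eq_forallb => i; rewrite inE. Qed.

Lemma card_sample_space_gt0 n N (V : view n) : (0 < #|sample_space N V|)%nat.
Proof. by rewrite sample_space_samples card_samples card_consset !expn_gt0. Qed.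

Lemma prob_ge_compl n N (V : view n) (E : pred {ffun 'I_N -> bstr n}) (delta : R) :
  INR #|[set S in sample_space N V | ~~ E S]| <= delta * INR #|sample_space N V| ->
  prob V E >= 1 - delta.
Proof.
move=> compl_le; rewrite /prob.
have /ltP/lt_INR ss_gt0 := card_sample_space_gt0 N V.
have split_ss : #|sample_space N V| = (#|[set S in sample_space N V | E S]|
                                        + #|[set S in sample_space N V | ~~ E S]|)%nat.
  rewrite -(cardsID [set S | E S]).
  by congr (_ + _)%nat; apply: eq_card => S; rewrite !inE andbC.
apply: Rle_ge; apply: (Rmult_le_reg_r _ _ _ ss_gt0).
rewrite /Rdiv Rmult_assoc Rinv_l; last by rewrite INR_0 in ss_gt0; lra.
by rewrite split_ss plus_INR in compl_le *; nra.
Qed.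

Lemma INR_nsamples_le eps n : INR (nsamples eps n) <= Rpower 2 (eps * INR n / 4).
Proof.
rewrite /nsamples; have [floor_le _] := base_Int_part (Rpower 2 (eps * INR n / 4)).
have pos : 0 < Rpower 2 (eps * INR n / 4) by apply: exp_pos.
by case: (Int_part _) floor_le => [|q|q] /= floor_le; [lra | rewrite INR_IPR | lra].
Qed.

Lemma INR_card_consset n (V : view n) :
  INR #|consset V| = Rpower 2 (INR n - INR (num_revealed V)).
Proof.
have revealed_le : (num_revealed V <= n)%nat.
  by rewrite -[leqRHS](card_ord n) max_card.
rewrite card_consset INR_expn -minus_INR; last exact/ssrnat.leP.
by rewrite Rpower_pow; [congr pow; simpl; ring | lra].
Qed.

Lemma quadratic_le_quartic_pow2 n x : (1 <= n)%nat -> 0 <= x ->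
  INR (n * (2 * n + 2)) <= 4 * INR n ^ 4 * Rpower 2 x.
Proof.
move=> /ssrnat.leP/le_INR; rewrite INR_1 => n_ge1 x_ge0.
have pow_ge1 : 1 <= Rpower 2 x by rewrite -(Rpower_O 2); [apply: Rle_Rpower | ]; lra.
rewrite -!multE -plusE mult_INR plus_INR mult_INR /=.
have : INR n ^ 2 <= INR n ^ 4 by apply: Rle_pow; [lra | lia].
have : INR n <= INR n ^ 2 by rewrite /= Rmult_1_r; nra.
simpl; nra.
Qed.

Lemma nsamples_sq_hball_le n (V : view n) (rho_r rho_w eps : R) :
  0 < eps -> 0 < rho_w < 1/2 -> rho_r < 1 - h2 rho_w - 2 * eps ->
  INR (num_revealed V) = rho_r * INR n ->
  INR (nsamples eps n) ^ 2 * INR #|hball n (rho_w * INR n)|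
    <= Rpower 2 (- eps * INR n) * INR #|consset V|.
Proof.
move=> eps_gt0 w_range rate_lt revealed; have n_ge0 := pos_INR n.
rewrite INR_card_consset revealed -Rpower_plus.
apply: Rle_trans (_ : Rpower 2 (eps * INR n / 4) ^ 2 * Rpower 2 (h2 rho_w * INR n) <= _).
  apply: Rmult_le_compat; [apply: pow_le; apply: pos_INR | apply: pos_INR | | ].
    by apply: pow_incr; split; [apply: pos_INR | apply: INR_nsamples_le].
  by apply: card_hball_le; lra.
rewrite -Rpower_pow ?Rpower_mult -?Rpower_plus; last exact: exp_pos.
by apply: Rle_Rpower; [lra | simpl INR; nra].
Qed.

Theorem lemma4p9 (rho_r rho_w eps : R) :
  0 < rho_r < 1 -> 0 < rho_w < 1/2 -> 0 < eps ->
  rho_r < 1 - h2 rho_w - 2 * eps ->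
  exists (c K : R) (n0 : nat), 0 < c /\ 0 < K /\
  forall (n : nat) (V : view n) (e : bstr n),
    (n0 <= n)%nat ->
    INR (num_revealed V) = rho_r * INR n ->
    INR (hweight e) <= rho_w * INR n ->
    prob V (fun S : {ffun 'I_(nsamples eps n) -> bstr n} =>
              Rleb (INR (num_bad e (rho_w * INR n) S))
                   (K * INR n ^ 4 * Rpower 2 (eps * INR n / 8)))
    >= 1 - exp (- c * INR n ^ 2).
Proof.
move=> [r_gt0 r_lt1] [w_gt0 w_lt] eps_gt0 rate_lt.
have ln2_gt0 : 0 < ln 2 by have := ln_lt_2; lra.
exists (eps * ln 2), 4, 1%nat; split; first nra; split; first lra.
move=> n V e n_ge1 revealed _.
set N := nsamples eps n; set rad := rho_w * INR n; set C := consset V.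
have base := nsamples_sq_hball_le eps_gt0 (conj w_gt0 w_lt) rate_lt revealed.
have few_bad : [set S in samples 'I_N C |
    ~~ Rleb (INR (num_bad e rad S)) (4 * INR n ^ 4 * Rpower 2 (eps * INR n / 8))]
    \subset many_bad N e rad C n.
  apply/subsetP => S; rewrite !inE => /andP[-> /RlebP not_le] /=.
  apply/ssrnat.leP/INR_le/Rlt_le/Rnot_le_lt => le_thr; apply: not_le.
  apply: Rle_trans le_thr (@quadratic_le_quartic_pow2 n (eps * INR n / 8) n_ge1 _).
  by have := pos_INR n; nra.
apply: prob_ge_compl; rewrite sample_space_samples card_samples card_ord INR_expn.
apply: Rle_trans (le_INR _ _ (ssrnat.leP (subset_leq_card few_bad))) _.
have -> : exp (- (eps * ln 2) * INR n ^ 2) = Rpower 2 (- eps * INR n) ^ n.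
  by rewrite -[in RHS]Rpower_pow ?Rpower_mult /Rpower; [congr exp; simpl; ring | apply: exp_pos].
apply: card_many_bad_le_R base.
by rewrite card_consset expn_gt0.
Qed.
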